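(* Let $k\ge 3$ be odd and let $G$ be an odd unicycle graph of girth $k$ with $n=|V(G)|$, whose unique cycle has vertices $u,u_1,\dots,u_{k-1}$ with $\deg u=4$ and $\deg u_i=2$ for $1\le i\le k-1$. Let $F$ be the set of edges of $G$ having no endpoint on the cycle. Let $\det(xI-T)=\sum_{j=0}^n\rho_j x^j$ be the characteristic polynomial of the transition matrix $T$ of $G$. Let $t$ be an integer with $1\le t\le (k-1)/2$. If $2^{k+2t}\rho_{n-k-2t}\in\mathbb{Z}$, then $$2^{2t}\sum_{\{e_1,\dots,e_t\}}\prod_{l=1}^t M(e_l)\in\mathbb{Z},$$ where the sum runs over all $t$-matchings $\{e_1,\dots,e_t\}\subseteq F$.
   Context: Graphs are simple, connected and finite. An odd unicycle graph is a non-bipartite graph with $|V|=|E|$, i.e. a connected graph with exactly one cycle, of odd length (its girth). The transition matrix $T$ on $\mathbb{C}^V$ has entries $T_{a,b}=1/\deg a$ if $a\sim b$ and $0$ otherwise. A $t$-matching is a set of $t$ pairwise disjoint edges. For an edge $e=ab$, $M(e)=\frac{1}{\deg a}\cdot\frac{1}{\deg b}$ (degrees in $G$). *)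

From HB Require Import structures.
From mathcomp Require Import all_boot all_order all_algebra.
Set Implicit Arguments. Unset Strict Implicit. Unset Printing Implicit Defensive.
Import Order.TTheory GRing.Theory Num.Theory.
Local Open Scope ring_scope.

Definition simple_graph (V : finType) (adj : rel V) : Prop :=
  symmetric adj /\ irreflexive adj.

Definition graph_connected (V : finType) (adj : rel V) : Prop :=
  forall a b : V, connect adj a b.

Definition deg (V : finType) (adj : rel V) (a : V) : nat := #|adj a|.

Definition edges (V : finType) (adj : rel V) : {set {set V}} :=
  [set [set a; b] | a in V, b in V & adj a b].

Definition bipartite (V : finType) (adj : rel V) : Prop :=
  exists f : V -> bool, forall a b, adj a b -> f a != f b.

Definition odd_unicycle (V : finType) (adj : rel V) : Prop :=
  [/\ simple_graph adj, graph_connected adj, #|edges adj| = #|V|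
    & ~ bipartite adj].

Definition transition (V : finType) (adj : rel V) : 'M[rat]_#|V| :=
  \matrix_(i, j) (if adj (enum_val i) (enum_val j)
                  then ((deg adj (enum_val i))%:R)^-1 else 0).

Definition Mw (V : finType) (adj : rel V) (e : {set V}) : rat :=
  \prod_(a in e) ((deg adj a)%:R)^-1.

Definition is_matching_in (V : finType) (F : {set {set V}}) (t : nat)
  (S : {set {set V}}) : bool :=
  [&& S \subset F, #|S| == t &
   [forall e1 in S, forall e2 in S, (e1 != e2) ==> [disjoint e1 & e2]]].

(* Expanding det(xI - T) over permutations, rho_(n-m) is a signed sum over the
   permutations s moving exactly m vertices and sending each moved vertex x to a
   neighbour, with weight prod (-1/deg x).  For m = k + 2t, which is odd, such an s
   has an orbit of length at least 3.  Such an orbit must run along the unique cycle: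
   otherwise, deleting an orbit edge {x, s x} with x off the cycle keeps the graph
   connected (go around the orbit) and keeps the cycle, yet leaves only |V| - 1 edges.
   Hence s rotates the cycle in one of its two directions and swaps the endpoints of
   t disjoint edges of F.  Each t-matching of F arises from exactly two such s, both
   of sign (-1)^t, and the cycle contributes -1/4 * (1/2)^(k-1), so that
   rho_(n-k-2t) = (-1)^(t+1) 2^(-k) * sum of prod M(e). *)

From HB Require Import structures.
From mathcomp Require Import all_boot all_order all_algebra.
From mathcomp Require Import fingroup perm zify ring.
Set Implicit Arguments. Unset Strict Implicit. Unset Printing Implicit Defensive.
Import Order.TTheory GRing.Theory Num.Theory.

(** * Permutations *)

Section PermFacts.
Variable T : finType.
Implicit Types (s : {perm T}) (A : {set T}).

Definition moved s : {set T} := [set x | s x != x].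

Definition on_long_cycle s x := (s x != x) && (s (s x) != x).

Lemma movedP s x : (x \in moved s) = (s x != x).
Proof. by rewrite inE. Qed.

Lemma moved_perm s x : s x != x -> s (s x) != s x.
Proof. by apply: contra => /eqP /perm_inj ->. Qed.

Lemma on_long_cycle_perm s x : on_long_cycle s x -> on_long_cycle s (s x).
Proof. by case/andP => h1 h2; rewrite /on_long_cycle !(inj_eq perm_inj) h1 h2. Qed.

Lemma card_involution_half s A :
    (forall x, x \in A -> [&& s x \in A, s x != x & s (s x) == x]) ->
  #|A| = (2 * #|[set x in A | enum_rank x < enum_rank (s x)]|)%N.
Proof.
move=> sA; set L := [set x in A | _].
have [ALB ADB] : A :&: [set x | enum_rank x < enum_rank (s x)] = L /\
                 A :\: [set x | enum_rank x < enum_rank (s x)] = s @: L.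
  split; apply/setP => z; rewrite !inE //; apply/andP/imsetP.
    case=> zB zA; have /and3P [szA sz /eqP ssz] := sA z zA.
    exists (s z); last by rewrite ssz.
    rewrite inE szA ssz ltn_neqAle leqNgt zB andbT.
    by apply: contra sz => /eqP /val_inj /enum_rank_inj ->.
  case=> x; rewrite inE => /andP [xA lt] ->.
  have /and3P [sxA _ /eqP ->] := sA x xA.
  by rewrite sxA -leqNgt ltnW.
rewrite -(cardsID [set x | enum_rank x < enum_rank (s x)] A) ALB ADB.
by rewrite card_imset ?mul2n ?addnn //; apply: perm_inj.
Qed.

Lemma exists_long_cycle s : odd #|moved s| -> exists x, on_long_cycle s x.
Proof.
case: (pickP (on_long_cycle s)) => [x Px _ | none]; first by exists x.
have inv x : x \in moved s -> [&& s x \in moved s, s x != x & s (s x) == x].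
  rewrite movedP => mx; have := none x.
  by rewrite /on_long_cycle mx movedP moved_perm // => /negbFE ->.
by rewrite (card_involution_half inv) oddM.
Qed.

Lemma odd_permX s n : odd_perm (s ^+ n)%g = odd n && odd_perm s.
Proof.
elim: n => [|n IH]; first by rewrite expg0 odd_perm1.
by rewrite expgS odd_permM IH /=; case: (odd_perm s); case: (odd n).
Qed.

Lemma odd_perm_involution N s :
  #|moved s| = (2 * N)%N -> involutive s -> odd_perm s = odd N.
Proof.
elim: N s => [|N IH] s card_s s_inv.
  suff -> : s = 1%g by rewrite odd_perm1.
  apply/permP => x; rewrite perm1; apply/eqP; apply: contraT => sx.
  by have := cards0_eq card_s; move/setP/(_ x); rewrite !inE sx.
have /set0Pn [x] : moved s != set0 by rewrite -card_gt0 card_s muln_gt0.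
rewrite movedP => sx; pose v := (tperm x (s x) * s)%g.
have vE y : v y = s (tperm x (s x) y) by rewrite permM.
have vx : v x = x by rewrite vE tpermL.
have vsx : v (s x) = s x by rewrite vE tpermR.
have vy y : y != x -> y != s x -> v y = s y by move=> *; rewrite vE tpermD // eq_sym.
have -> : s = (tperm x (s x) * v)%g by rewrite mulgA tperm2 mul1g.
rewrite odd_mul_tperm eq_sym sx (IH v) //=.
  have : moved s = x |: (s x |: moved v).
    apply/setP => y; rewrite !inE; have [->|yx] := eqVneq y x; first by rewrite sx.
    have [->|ysx] /= := eqVneq y (s x); first by rewrite s_inv eq_sym sx.
    by rewrite vy.
  move=> E; move: card_s; rewrite E !cardsU1 !inE vx vsx !eqxx.
  by rewrite (eq_sym x) (negbTE sx) /=; lia.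
move=> y; have [->|yx] := eqVneq y x; first by rewrite !vx.
have [->|ysx] := eqVneq y (s x); first by rewrite !vsx.
have syx : s y != x by apply: contra ysx => /eqP <-; rewrite s_inv.
have sysx : s y != s x by rewrite (inj_eq perm_inj).
by rewrite (vy y) ?(vy (s y)) ?s_inv.
Qed.

End PermFacts.

(** * The characteristic polynomial as a sum over permutations *)

Section PermTransfer.
Variables (T T' : finType) (f : T -> T') (g : T' -> T).
Hypotheses (fK : cancel f g) (gK : cancel g f).

Lemma transfer_perm_inj (s : {perm T}) : injective (f \o s \o g).
Proof. by move=> x y /= /(can_inj fK) /perm_inj /(can_inj gK). Qed.

Definition transfer_perm (s : {perm T}) : {perm T'} := perm (@transfer_perm_inj s).

Lemma transfer_permE s y : transfer_perm s y = f (s (g y)).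
Proof. by rewrite permE. Qed.

Lemma transfer_permM s1 s2 : transfer_perm (s1 * s2) = (transfer_perm s1 * transfer_perm s2)%g.
Proof. by apply/permP => y; rewrite permM !transfer_permE permM fK. Qed.

Lemma transfer_perm1 : transfer_perm 1 = 1%g.
Proof. by apply/permP => y; rewrite transfer_permE !perm1 gK. Qed.

Lemma transfer_perm_tperm a b : transfer_perm (tperm a b) = tperm (f a) (f b).
Proof.
apply/permP => y; rewrite transfer_permE -{2}[y]gK.
by rewrite -(inj_tperm _ _ _ (can_inj fK)).
Qed.

Lemma odd_transfer_perm s : odd_perm (transfer_perm s) = odd_perm s.
Proof.
have [ts -> dts] := prod_tpermP s.
have -> : transfer_perm (\prod_(p <- ts) tperm p.1 p.2)%g =
          (\prod_(p <- [seq (f p.1, f p.2) | p <- ts]) tperm p.1 p.2)%g.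
  elim: ts {dts} => [|p ts IH]; first by rewrite !big_nil transfer_perm1.
  by rewrite /= !big_cons transfer_permM IH transfer_perm_tperm.
rewrite !odd_perm_prod ?size_map // all_map.
by apply: sub_all dts => p /=; rewrite /dpair /= (can_eq fK).
Qed.

End PermTransfer.

Lemma transfer_perm_bij (T T' : finType) (f : T -> T') (g : T' -> T)
    (fK : cancel f g) (gK : cancel g f) :
  bijective (transfer_perm fK gK).
Proof.
by exists (transfer_perm gK fK) => s; apply/permP => x; rewrite !transfer_permE ?fK ?gK.
Qed.

Section CharPolyPermExpansion.
Local Open Scope ring_scope.
Variables (R : comNzRingType) (V : finType) (a : V -> V -> R).
Hypothesis a_diag0 : forall x, a x x = 0.

Let A : 'M[R]_#|V| := \matrix_(i, j) a (enum_val i) (enum_val j).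

Lemma char_poly_perm_expansion :
  char_poly A = \sum_(s : {perm V})
    ((-1) ^+ s * \prod_(x in moved s) (- a x (s x)))%:P * 'X^(#|V| - #|moved s|).
Proof.
pose tr := transfer_perm (@enum_rankK V) (@enum_valK V).
rewrite /char_poly /determinant (reindex tr); last first.
  by apply: onW_bij; apply: transfer_perm_bij.
apply: eq_bigr => s _; rewrite odd_transfer_perm.
rewrite (reindex (@enum_rank V)) /=; last first.
  by apply: onW_bij; exists enum_val; [apply: enum_rankK | apply: enum_valK].
have entry x : char_poly_mx A (enum_rank x) (tr s (enum_rank x))
   = if x \in moved s then (- a x (s x))%:P else 'X.
  rewrite !mxE transfer_permE !enum_rankK (inj_eq enum_rank_inj) movedP eq_sym.
  by case: eqP => [->|_]; rewrite ?a_diag0 ?mulr1n ?subr0 ?mulr0n ?sub0r ?polyCN.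
rewrite (eq_bigr _ (fun x _ => entry x)) (bigID (mem (moved s))) /=.
rewrite (eq_bigr (fun x => (- a x (s x))%:P)) => [|x ->] //.
have fixed_part : \prod_(x | x \notin moved s)
    (if x \in moved s then (- a x (s x))%:P else 'X) = 'X^(#|V| - #|moved s|).
  rewrite (eq_bigr (fun _ => 'X)) => [|x /negbTE ->] //; rewrite prodr_const.
  by rewrite -(cardC (mem (moved s))) addKn.
by rewrite fixed_part -rmorph_prod mulrA polyCM rmorph_sign.
Qed.

Lemma char_poly_coef_moved m : (m <= #|V|)%N ->
  (char_poly A)`_(#|V| - m) =
  \sum_(s : {perm V} | #|moved s| == m) (-1) ^+ s * \prod_(x in moved s) (- a x (s x)).
Proof.
move=> le_mV; rewrite char_poly_perm_expansion coef_sum [RHS]big_mkcond /=.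
apply: eq_bigr => s _; rewrite coefCM coefXn.
have le_sV : (#|moved s| <= #|V|)%N by apply: max_card.
have -> : (#|V| - m == #|V| - #|moved s|)%N = (#|moved s| == m).
  by apply/eqP/eqP; lia.
by case: eqP; rewrite ?mulr1 ?mulr0.
Qed.

End CharPolyPermExpansion.

(** * Cyclic ordinals and graphs containing a cycle *)

Section CyclicOrdinals.
Variable k : nat.
Implicit Types i j : 'I_k.

Lemma iter_ordS_val n i : val (iter n (@ordS k) i) = ((i + n) %% k)%N.
Proof.
elim: n => [|n IH]; first by rewrite addn0 modn_small.
by rewrite iterS /= IH -addn1 modnDml addn1 addnS.
Qed.

Lemma iter_ordS_onto i j : exists n, iter n (@ordS k) i = j.
Proof.
exists (j + k - i)%N; apply: val_inj; rewrite iter_ordS_val /=.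
rewrite subnKC; last by rewrite (leq_trans (ltnW (ltn_ord i))) // leq_addl.
by rewrite modnDr modn_small.
Qed.

Lemma iter_ordS_period i : iter k (@ordS k) i = i.
Proof. by apply: val_inj; rewrite iter_ordS_val modnDr modn_small. Qed.

Let modn_wrap m : (m < 2 * k)%N -> (m %% k = if m < k then m else m - k)%N.
Proof.
case: (ltnP m k) => [lt_mk _|le_km lt_m2k]; first exact: modn_small.
by rewrite -{1}(subnK le_km) modnDr modn_small //; lia.
Qed.

Lemma ordS_neq i : (1 < k)%N -> ordS i != i.
Proof.
case: i => m lt_mk k_gt1; apply/eqP => /(congr1 val).
by rewrite -[ordS _]/(iter 1 _ _) iter_ordS_val /= modn_wrap; [case: ltnP|]; lia.
Qed.

Lemma ordS2_neq i : (2 < k)%N -> ordS (ordS i) != i.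
Proof.
case: i => m lt_mk k_gt2; apply/eqP => /(congr1 val).
by rewrite -[ordS _]/(iter 2 _ _) iter_ordS_val /= modn_wrap; [case: ltnP|]; lia.
Qed.

Lemma ordS_neq_pred i : (2 < k)%N -> ordS i != ord_pred i.
Proof. by move=> k_gt2; rewrite -(inj_eq (@ordS_inj k)) ord_predK ordS2_neq. Qed.

Definition ord_step (b : bool) : 'I_k -> 'I_k := if b then @ordS k else @ord_pred k.

Lemma ord_stepK b : cancel (ord_step b) (ord_step (~~ b)).
Proof. by case: b => j; rewrite /= ?ord_predK ?ordSK. Qed.

Lemma ord_stepVK b : cancel (ord_step (~~ b)) (ord_step b).
Proof. by case: b => j; rewrite /= ?ord_predK ?ordSK. Qed.

Lemma ord_step_neq b j : (2 < k)%N -> ord_step b j != j.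
Proof.
move=> k_gt2; case: b; first exact: ordS_neq (ltnW k_gt2).
by rewrite -(inj_eq (@ordS_inj k)) ord_predK eq_sym ordS_neq // ltnW.
Qed.

Lemma iter_ord_predK n j : iter n (@ord_pred k) (iter n (@ordS k) j) = j.
Proof. by elim: n => [//|n IH]; rewrite iterSr iterS ordSK. Qed.

Lemma iter_ord_step_period b j : iter k (ord_step b) j = j.
Proof.
case: b; first exact: iter_ordS_period.
by rewrite -[in LHS](iter_ordS_period j) iter_ord_predK.
Qed.

Lemma iter_ord_step_onto b i j : exists n, iter n (ord_step b) i = j.
Proof.
case: b; first exact: iter_ordS_onto.
by have [n <-] := iter_ordS_onto j i; exists n; rewrite iter_ord_predK.
Qed.

End CyclicOrdinals.

Lemma set2_eq_cases (T : finType) (a b a' b' : T) : a != b ->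
  [set a; b] = [set a'; b'] -> (a = a' /\ b = b') \/ (a = b' /\ b = a').
Proof.
move=> ab E.
have /set2P [] : a \in [set a'; b'] by rewrite -E set21.
all: have /set2P [] : b \in [set a'; b'] by rewrite -E set22.
all: by move=> ? ?; subst; rewrite ?eqxx in ab; auto.
Qed.

Section Graph.
Variables (V : finType) (r : rel V).
Hypothesis r_irr : irreflexive r.

Lemma edgeP a b : r a b -> [set a; b] \in edges r.
Proof. by move=> ab; apply/imset2P; exists a b; rewrite ?inE. Qed.

Lemma edge_neq a b : r a b -> a != b.
Proof. by apply: contraTneq => ->; rewrite r_irr. Qed.

Lemma connected_descent (C : {set V}) : (forall a b, connect r a b) -> C != set0 ->
  exists h : V -> nat, forall v, v \notin C -> exists2 u, r v u & (h u < h v)%N.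
Proof.
move=> r_conn /set0Pn [c0 c0C].
pose reach v n := [exists p : n.-tuple V, path r v p && (last v p \in C)].
have reach_ex v : exists n, reach v n.
  have /connectP [p pth c0E] := r_conn v c0.
  by exists (size p); apply/existsP; exists (in_tuple p); rewrite pth -c0E.
exists (fun v => ex_minn (reach_ex v)) => v vC.
case: ex_minnP => n /existsP [p /andP [pth pC]] min_n.
case: n p pth pC min_n => [|n] p; first by rewrite tuple0 /= (negbTE vC).
case/tupleP: p => u p /= /andP [vu pth] pC min_n; exists u => //.
case: ex_minnP => m _ min_m; apply: leq_ltn_trans (min_m n _) _ => //.
by apply/existsP; exists p; rewrite pth.
Qed.

Lemma card_le_card_edges k (c : 'I_k -> V) :
    (forall a b, connect r a b) -> (2 < k)%N -> injective c ->
    (forall i, r (c i) (c (ordS i))) ->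
  (#|V| <= #|edges r|)%N.
Proof.
move=> r_conn k_gt2 c_inj c_adj; pose C := [set c i | i : 'I_k].
have C_ne0 : C != set0.
  by apply/set0Pn; exists (c (Ordinal (ltnW (ltnW k_gt2)))); apply: imset_f.
have [h h_desc] := connected_descent r_conn C_ne0.
pose parent v := odflt v [pick u | r v u && (h u < h v)%N].
have parentP v : v \notin C -> r v (parent v) && (h (parent v) < h v)%N.
  move=> /h_desc [u vu hu]; rewrite /parent; case: pickP => [//|/(_ u)].
  by rewrite vu hu.
pose cycle_edges := [set [set c i; c (ordS i)] | i : 'I_k].
pose tree_edges := [set [set v; parent v] | v in ~: C].
have card_cycle : #|cycle_edges| = k.
  rewrite card_imset ?card_ord // => i j /(set2_eq_cases (edge_neq (c_adj i))).
  case=> [[/c_inj //]|[/c_inj ij /c_inj ji]].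
  by move: (ordS2_neq j k_gt2); rewrite -ij ji eqxx.
have card_tree : #|tree_edges| = #|~: C|.
  rewrite card_in_imset // => u v; rewrite !inE.
  move=> /parentP /andP [up hu] /parentP /andP [_ hv].
  case/(set2_eq_cases (edge_neq up)) => [[//]|[uE pvu]]; subst u.
  by move: hu; rewrite pvu => /(ltn_trans hv); rewrite ltnn.
have disj : [disjoint cycle_edges & tree_edges].
  rewrite disjoints_subset; apply/subsetP => _ /imsetP [i _ ->].
  rewrite inE; apply/imsetP => -[v]; rewrite inE => vC E_eq.
  have : v \in [set c i; c (ordS i)] by rewrite E_eq set21.
  by rewrite !inE => /orP [] /eqP vc; rewrite vc imset_f in vC.
rewrite -(cardsC C) card_imset // card_ord -card_cycle -card_tree.
have := (leq_card_setU cycle_edges tree_edges).2; rewrite disj => /eqP <-.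
apply/subset_leq_card/subsetP => E; rewrite inE => /orP [] /imsetP [v vC ->].
  exact/edgeP/c_adj.
by move: vC; rewrite inE => /parentP /andP [/edgeP].
Qed.

End Graph.

(** * Permutations along an odd unicycle graph *)

Definition along (T : finType) (r : rel T) (s : {perm T}) := [forall y in moved s, r y (s y)].

Lemma along_rel (T : finType) (r : rel T) (s : {perm T}) y :
  along r s -> s y != y -> r y (s y).
Proof. by move=> /forall_inP sr sy; apply: sr; rewrite movedP. Qed.

Lemma connect_around_orbit (T : finType) (r : rel T) (s : {perm T}) x :
    along r s -> on_long_cycle s x ->
  connect [rel a b | r a b && ([set a; b] != [set x; s x])] (s x) x.
Proof.
move=> sr /andP [sx ssx]; set r' := [rel a b | _].
have moved_iter j : s (iter j s (s x)) != iter j s (s x).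
  by elim: j => [|j IH] /=; apply: moved_perm.
suff [] : connect r' (s x) x \/ connect r' (s x) (iter #[s]%g.-1 s (s x)) => //.
  by rewrite -iterSr prednK ?order_gt0 // -permX expg_order perm1.
elim: #[s]%g.-1 => [|j [back|IH]]; [by right | by left | set y := iter j s (s x) in IH *].
have [yx | yx] := eqVneq y x; [by left; rewrite -[X in connect _ _ X]yx | right].
rewrite iterS; apply: connect_trans IH (connect1 _).
rewrite /= along_rel ?moved_iter //=; apply: contra yx => /eqP.
have ysy : y != s y by rewrite eq_sym moved_iter.
by case/(set2_eq_cases ysy) => [[/eqP //]|[ysx syx]]; rewrite -ysx syx eqxx in ssx.
Qed.

Definition cycle_vertices (V : finType) k (c : 'I_k -> V) := [set c i | i : 'I_k].

Section Unicycle.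
Variables (V : finType) (adj : rel V) (k : nat) (c : 'I_k -> V).
Hypotheses (adj_sym : symmetric adj) (adj_irr : irreflexive adj)
  (adj_conn : forall a b, connect adj a b) (card_edges : #|edges adj| = #|V|)
  (k_gt2 : (2 < k)%N) (c_inj : injective c) (c_adj : forall i, adj (c i) (c (ordS i))).

Local Notation C := (cycle_vertices c).

Lemma long_cycle_on_cycle (s : {perm V}) x :
  along adj s -> on_long_cycle s x -> x \in C.
Proof.
move=> sa sx; apply: contraT => xC; pose E0 := [set x; s x].
pose r := [rel a b | adj a b && ([set a; b] != E0)].
have r_sym : symmetric r by move=> a b; rewrite /= adj_sym setUC.
have r_irr : irreflexive r by move=> a; rewrite /= adj_irr.
have r_cyc i : r (c i) (c (ordS i)).
  rewrite /= c_adj; apply: contra xC => /eqP E.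
  have : x \in [set c i; c (ordS i)] by rewrite E set21.
  by rewrite !inE => /orP [] /eqP ->; rewrite imset_f.
have r_conn a b : connect r a b.
  apply: connect_sub (adj_conn a b) => {}a {}b ab.
  have [E|] := eqVneq [set a; b] E0; last by move=> ne; apply: connect1; rewrite /= ab.
  have [[-> ->]|[-> ->]] := set2_eq_cases (edge_neq adj_irr ab) E.
    by rewrite (sym_connect_sym r_sym); apply: connect_around_orbit.
  exact: connect_around_orbit.
have E0_edge : E0 \in edges adj by apply: edgeP; apply: along_rel; case/andP: sx.
have : edges r \subset edges adj :\ E0.
  apply/subsetP => E /imset2P [a b _]; rewrite !inE /= => /andP [ab ne] ->.
  by rewrite ne edgeP.
move/subset_leq_card; have := card_le_card_edges r_irr r_conn k_gt2 c_inj r_cyc.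
have := cardsD1 E0 (edges adj); rewrite E0_edge card_edges add1n => -> le_Vr le_r.
by have := leq_trans le_Vr le_r; rewrite ltnn.
Qed.

Hypothesis c_deg2 : forall i : 'I_k, val i != 0%N -> deg adj (c i) = 2.

Lemma nbr_deg2 j y : val j != 0%N -> adj (c j) y -> y = c (ordS j) \/ y = c (ord_pred j).
Proof.
move=> j0 jy; pose N := [set c (ordS j); c (ord_pred j)].
have N_sub : N \subset [set z | adj (c j) z].
  apply/subsetP => z; rewrite !inE => /orP [] /eqP ->; first exact: c_adj.
  by rewrite adj_sym -{2}(ord_predK j) c_adj.
have : N == [set z | adj (c j) z].
  rewrite eqEcard N_sub cards2 (inj_eq c_inj) ordS_neq_pred //.
  by rewrite -(c_deg2 j0); apply: eq_leq; apply: eq_card => z; rewrite inE.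
have : y \in [set z | adj (c j) z] by rewrite inE.
by move=> + /eqP NE; rewrite -NE !inE => /orP [] /eqP; auto.
Qed.

Lemma cycle_nbr b i y : adj (c i) y -> y \in C ->
  y = c (ord_step b i) \/ y = c (ord_step (~~ b) i).
Proof.
suff nbr : adj (c i) y -> y \in C -> y = c (ordS i) \/ y = c (ord_pred i).
  by move=> iy yC; case: b; have [] := nbr iy yC; auto.
move=> iy /imsetP [j _ yE]; subst y.
have [i0|i0] := eqVneq (val i) 0%N; last exact: nbr_deg2.
have j0 : val j != 0%N.
  by apply: contraTneq iy => j0; rewrite (_ : j = i) ?adj_irr //; apply: val_inj; rewrite /= j0 i0.
rewrite adj_sym in iy; case: (nbr_deg2 j0 iy) => /c_inj ->; rewrite ?ordSK ?ord_predK; auto.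
Qed.

Lemma along_rotates_cycle (s : {perm V}) b i :
    along adj s -> on_long_cycle s (c i) -> s (c i) = c (ord_step b i) ->
  forall j, s (c j) = c (ord_step b j).
Proof.
move=> sa si sbi; pose it n := iter n (ord_step b) i.
suff step n : s (c (it n)) = c (ord_step b (it n)) /\ on_long_cycle s (c (it n)).
  by move=> j; have [n <-] := iter_ord_step_onto b i j; case: (step n).
elim: n => [//|n [sbn long_n]]; rewrite /it iterS -/(it n).
have long_Sn : on_long_cycle s (c (ord_step b (it n))).
  by rewrite -sbn; apply: on_long_cycle_perm.
split=> //; have /andP [moved_Sn _] := long_Sn.
have := long_cycle_on_cycle sa (on_long_cycle_perm long_Sn).
case/(cycle_nbr b (along_rel sa moved_Sn)) => // back.
by case/andP: long_n => _; rewrite sbn back ord_stepK eqxx.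
Qed.

Lemma along_odd_rotation (s : {perm V}) :
  along adj s -> odd #|moved s| -> exists b, forall j, s (c j) = c (ord_step b j).
Proof.
move=> sa /exists_long_cycle [x long_x].
have /imsetP [i _ xE] := long_cycle_on_cycle sa long_x; subst x.
have /andP [moved_i _] := long_x.
have := long_cycle_on_cycle sa (on_long_cycle_perm long_x).
case/(cycle_nbr true (along_rel sa moved_i)) => [sSi|sPi].
  by exists true; apply: along_rotates_cycle sSi.
by exists false; apply: along_rotates_cycle sPi.
Qed.

Lemma along_rotation_off_cycle (s : {perm V}) b x :
    along adj s -> (forall j, s (c j) = c (ord_step b j)) -> x \notin C -> s x != x ->
  s x \notin C /\ s (s x) = x.
Proof.
move=> sa s_rot xC sx; split.
  apply: contra xC => /imsetP [j _ sxE].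
  have : s (c (ord_step (~~ b) j)) = s x by rewrite s_rot ord_stepVK sxE.
  by move/perm_inj <-; apply: imset_f.
apply/eqP; apply: contraT => ssx.
by have := long_cycle_on_cycle sa (introT andP (conj sx ssx)); rewrite (negbTE xC).
Qed.

Variable t : nat.
Hypothesis k_odd : odd k.

Definition admissible (s : {perm V}) := (#|moved s| == k + 2 * t)%N && along adj s.

Definition cycle_free_edges := [set e in edges adj | [disjoint e & C]].

Definition off_cycle_moved (s : {perm V}) := moved s :\: C.

Definition matching_of (s : {perm V}) := [set [set x; s x] | x in off_cycle_moved s].

Lemma card_cycle_vertices : #|C| = k.
Proof. by rewrite card_imset // card_ord. Qed.

Lemma admissible_rotation s : admissible s -> exists b, forall j, s (c j) = c (ord_step b j).
Proof.
case/andP => /eqP card_s sa; apply: along_odd_rotation => //.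
by rewrite card_s oddD k_odd oddM.
Qed.

Section Rotating.
Variables (s : {perm V}) (b : bool).
Hypotheses (s_adm : admissible s) (s_rot : forall j, s (c j) = c (ord_step b j)).

Let sa : along adj s := (andP s_adm).2.

Lemma moved_admissible : moved s = C :|: off_cycle_moved s.
Proof.
apply/setP => x; rewrite !inE; case: (boolP (x \in C)) => [/imsetP [j _ ->]|] //=.
by rewrite s_rot (inj_eq c_inj) ord_step_neq.
Qed.

Lemma card_off_cycle_moved : #|off_cycle_moved s| = (2 * t)%N.
Proof.
have disj : C :&: off_cycle_moved s = set0 by apply/setP => x; rewrite !inE; case: (x \in C).
have /andP [+ _] := s_adm; rewrite moved_admissible cardsU disj cards0 subn0.
by rewrite card_cycle_vertices => /eqP; lia.
Qed.

Lemma off_cycle_moved_inv x : x \in off_cycle_moved s ->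
  [&& s x \in off_cycle_moved s, s x != x & s (s x) == x].
Proof.
rewrite !inE => /andP [xC sx]; have [sxC ->] := along_rotation_off_cycle sa s_rot xC sx.
by rewrite sxC eq_sym sx eqxx.
Qed.

Lemma perm_exp_cycle_length x : (s ^+ k)%g x = if x \in C then x else s x.
Proof.
rewrite permX; case: ifP => [/imsetP [j _ ->]|xC].
  have iter_c n : iter n s (c j) = c (iter n (ord_step b) j).
    by elim: n => [//|n IH]; rewrite !iterS IH s_rot.
  by rewrite iter_c iter_ord_step_period.
have [sx|sx] := eqVneq (s x) x; first by rewrite sx; elim: k => //= n ->.
have /and3P [_ _ /eqP ssx] : [&& s x \in off_cycle_moved s, s x != x & s (s x) == x].
  by apply: off_cycle_moved_inv; rewrite !inE xC.
have iter_x n : iter n s x = if odd n then s x else x.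
  by elim: n => [//|n IH]; rewrite iterS IH /=; case: (odd n); rewrite ?ssx.
by rewrite iter_x k_odd.
Qed.

Lemma odd_perm_admissible : odd_perm s = odd t.
Proof.
rewrite -(andTb (odd_perm s)) -k_odd -odd_permX.
apply: odd_perm_involution.
  rewrite -card_off_cycle_moved; apply: eq_card => x.
  by rewrite !inE perm_exp_cycle_length; case: ifP; rewrite ?eqxx.
move=> x; rewrite !perm_exp_cycle_length; case: (boolP (x \in C)) => xC /=; first by rewrite xC.
have [sx|sx] := eqVneq (s x) x; first by rewrite sx (negbTE xC).
have xO : x \in off_cycle_moved s by rewrite !inE xC.
have /and3P [sxO _ /eqP ssx] := off_cycle_moved_inv xO.
by move: sxO; rewrite inE => /andP [/negbTE -> _].
Qed.

Lemma matching_of_edge x z : x \in off_cycle_moved s -> z \in [set x; s x] ->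
  [set x; s x] = [set z; s z].
Proof.
move=> xO; rewrite !inE => /orP [] /eqP -> //.
by have /and3P [_ _ /eqP ->] := off_cycle_moved_inv xO; rewrite setUC.
Qed.

Lemma cover_matching_of : cover (matching_of s) = off_cycle_moved s.
Proof.
apply/setP => z; apply/bigcupP/idP => [[_ /imsetP [x xO ->]]|zO].
  by case/set2P => ->; have /and3P [] := off_cycle_moved_inv xO.
by exists [set z; s z]; [apply: imset_f | rewrite set21].
Qed.

Lemma trivIset_matching_of : trivIset (matching_of s).
Proof.
apply/trivIsetP => _ _ /imsetP [x xO ->] /imsetP [y yO ->]; apply: contraR.
case/pred0Pn => z /andP [/(matching_of_edge xO) -> /(matching_of_edge yO) ->].
by rewrite eqxx.
Qed.

Lemma card_matching_of : #|matching_of s| = t.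
Proof.
have /eqP := card_involution_half off_cycle_moved_inv.
rewrite card_off_cycle_moved eqn_pmul2l // => /eqP ->.
set half := [set x in _ | _]; have -> : matching_of s = [set [set x; s x] | x in half].
  apply/setP => E; apply/imsetP/imsetP => [[x xO ->]|[x /setIdP [xO _] ->]]; last by exists x.
  have /and3P [sxO sx /eqP ssx] := off_cycle_moved_inv xO.
  case: (ltngtP (enum_rank x) (enum_rank (s x))) => [lt|gt|/val_inj/enum_rank_inj eq].
  - by exists x; rewrite // inE xO lt.
  - by exists (s x); [rewrite inE sxO ssx gt | rewrite ssx setUC].
  - by rewrite -eq eqxx in sx.
apply: card_in_imset => x y /setIdP [xO lt_x] /setIdP [_ lt_y] E.
have /and3P [_ sx _] := off_cycle_moved_inv xO.
have xsx : x != s x by rewrite eq_sym.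
case: (set2_eq_cases xsx E) => [[//]|[xE yE]].
by move: lt_y; rewrite -xE -yE => /(ltn_trans lt_x); rewrite ltnn.
Qed.

Lemma matching_of_matching : is_matching_in cycle_free_edges t (matching_of s).
Proof.
apply/and3P; split; last 2 first.
- by rewrite card_matching_of.
- apply/forall_inP => E1 E1s; apply/forall_inP => E2 E2s; apply/implyP.
  by have /trivIsetP := trivIset_matching_of; apply.
apply/subsetP => _ /imsetP [x xO ->].
have /and3P [sxO sx _] := off_cycle_moved_inv xO.
rewrite /cycle_free_edges inE edgeP ?along_rel //=.
rewrite disjoints_subset; apply/subsetP => z; rewrite !inE.
by case/orP => /eqP ->; [move: xO | move: sxO]; rewrite !inE => /andP [].
Qed.

End Rotating.

Section MatchingLift.
Variable S : {set {set V}}.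
Hypothesis S_match : is_matching_in cycle_free_edges t S.

Lemma matching_edgeP E : E \in S ->
  exists a b, [/\ E = [set a; b], adj a b, a \notin C & b \notin C].
Proof.
case/and3P: S_match => /subsetP sub _ _ /sub; rewrite inE => /andP [].
case/imset2P => a b _; rewrite inE => ab -> /=.
rewrite disjoints_subset => /subsetP aC; exists a, b.
by split; rewrite // -in_setC aC ?set21 ?set22.
Qed.

Lemma matching_share E1 E2 x : E1 \in S -> E2 \in S -> x \in E1 -> x \in E2 -> E1 = E2.
Proof.
case/and3P: S_match => _ _ /forall_inP disj E1S E2S xE1 xE2.
apply: contraTeq (disj E1 E1S) => ne; rewrite negb_forall_in; apply/existsP; exists E2.
by rewrite E2S ne /= -setI_eq0; apply/set0Pn; exists x; rewrite inE xE1.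
Qed.

Lemma matching_set2_neq x y : [set x; y] \in S -> x != y.
Proof.
case/matching_edgeP => a [b [E ab _ _]].
by have := cards2 x y; rewrite E cards2 (edge_neq adj_irr ab); case: (x != y).
Qed.

Definition partner x := odflt x [pick y | [set x; y] \in S].

Lemma partner_edge x : x \in cover S -> [set x; partner x] \in S.
Proof.
case/bigcupP => E ES xE; rewrite /partner; case: pickP => [y //|none].
have [a [b [Eab _ _ _]]] := matching_edgeP ES.
move: xE ES; rewrite Eab => /set2P [] xE abS; [have := none b | have := none a].
  by rewrite xE abS.
by rewrite xE setUC abS.
Qed.

Lemma partner_eq x y : [set x; y] \in S -> partner x = y.
Proof.
move=> xyS; have xc : x \in cover S by apply/bigcupP; exists [set x; y]; rewrite ?set21.
have := matching_share xyS (partner_edge xc) (set21 _ _) (set21 _ _).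
move/setP/(_ y); rewrite set22 !inE => /esym /orP [/eqP yx|/eqP //].
by have := matching_set2_neq xyS; rewrite yx eqxx.
Qed.

Lemma partner_out x : x \notin cover S -> partner x = x.
Proof.
move=> xc; rewrite /partner; case: pickP => [y xyS|//].
by case/bigcupP: xc; exists [set x; y]; rewrite ?set21.
Qed.

Lemma partnerK : involutive partner.
Proof.
move=> x; have [xc|xc] := boolP (x \in cover S); last by rewrite !partner_out.
by apply: partner_eq; rewrite setUC partner_edge.
Qed.

Lemma cover_off_cycle x : x \in cover S -> x \notin C.
Proof.
move=> /partner_edge /matching_edgeP [a [b [E _ aC bC]]].
have : x \in [set a; b] by rewrite -E set21.
by rewrite !inE => /orP [] /eqP ->.
Qed.

Lemma partner_cover x : x \in cover S -> partner x \in cover S.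
Proof. by move=> xc; apply/bigcupP; exists [set x; partner x]; rewrite ?partner_edge ?set22. Qed.

Lemma partner_adj x : x \in cover S -> adj x (partner x).
Proof.
move=> xc; have xyS := partner_edge xc; have [a [b [E ab _ _]]] := matching_edgeP xyS.
by have [[-> ->]|[-> ->]] := set2_eq_cases (matching_set2_neq xyS) E; rewrite // adj_sym.
Qed.

Lemma partner_off_cycle x : x \notin C -> partner x \notin C.
Proof.
by have [/partner_cover/cover_off_cycle|/partner_out ->] := boolP (x \in cover S).
Qed.

Definition switch b x := if [pick i | c i == x] is Some i then c (ord_step b i) else partner x.

Lemma switch_cycle b j : switch b (c j) = c (ord_step b j).
Proof.
rewrite /switch; case: pickP => [i /eqP /c_inj -> //|none].
by have := none j; rewrite eqxx.
Qed.

Lemma switch_off_cycle b x : x \notin C -> switch b x = partner x.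
Proof.
move=> xC; rewrite /switch; case: pickP => [i /eqP ci|//].
by move: xC; rewrite -ci imset_f.
Qed.

Lemma switchK b : cancel (switch b) (switch (~~ b)).
Proof.
move=> x; have [/imsetP [j _ ->]|xC] := boolP (x \in C).
  by rewrite !switch_cycle ord_stepK.
by rewrite !switch_off_cycle ?partner_off_cycle ?partnerK.
Qed.

Definition matching_perm b : {perm V} := perm (can_inj (switchK b)).

Lemma matching_permE b x : matching_perm b x = switch b x.
Proof. by rewrite permE. Qed.

Lemma card_cover_matching : #|cover S| = (2 * t)%N.
Proof.
have S_triv : trivIset S.
  apply/trivIsetP => E1 E2 E1S E2S; apply: contraR => /pred0Pn [x /andP [xE1 xE2]].
  by rewrite (matching_share E1S E2S xE1 xE2).
rewrite -(eqP S_triv) (eq_bigr (fun _ => 2%N)) => [|E /matching_edgeP [a [b [-> ab _ _]]]].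
  by case/and3P: S_match => _ /eqP <- _; rewrite sum_nat_const mulnC.
by rewrite cards2 (edge_neq adj_irr ab).
Qed.

Lemma moved_matching_perm b : moved (matching_perm b) = C :|: cover S.
Proof.
apply/setP => x; rewrite !inE matching_permE.
have [/imsetP [j _ ->]|xC] /= := boolP (x \in C).
  by rewrite switch_cycle (inj_eq c_inj) ord_step_neq.
rewrite switch_off_cycle //.
have [xc|xc] := boolP (x \in cover S); last by rewrite partner_out ?eqxx.
by rewrite eq_sym matching_set2_neq ?partner_edge.
Qed.

Lemma off_cycle_moved_matching_perm b : off_cycle_moved (matching_perm b) = cover S.
Proof.
apply/setP => x; rewrite inE moved_matching_perm inE.
by case: (boolP (x \in cover S)) => [/cover_off_cycle ->|_]; rewrite ?orbT ?orbF ?andNb.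
Qed.

Lemma matching_perm_admissible b : admissible (matching_perm b).
Proof.
apply/andP; split.
  rewrite moved_matching_perm cardsU card_cycle_vertices card_cover_matching.
  suff -> : C :&: cover S = set0 by rewrite cards0 subn0.
  apply/setP => x; rewrite !inE.
  by case: (boolP (x \in cover S)) => [/cover_off_cycle/negbTE ->|_]; rewrite ?andbF.
rewrite /along; apply/forall_inP => x; rewrite moved_matching_perm !inE matching_permE.
case/orP => [/imsetP [j _ ->]|xc]; rewrite ?switch_cycle.
  case: b => /=; first exact: c_adj.
  by rewrite adj_sym -[X in adj _ (c X)](ord_predK j) c_adj.
by rewrite switch_off_cycle ?cover_off_cycle ?partner_adj.
Qed.

Lemma matching_of_matching_perm b : matching_of (matching_perm b) = S.
Proof.
apply/setP => E; rewrite /matching_of off_cycle_moved_matching_perm.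
apply/imsetP/idP => [[x xc ->]|ES].
  by rewrite matching_permE switch_off_cycle ?cover_off_cycle ?partner_edge.
have [a [b' [Eab _ _ _]]] := matching_edgeP ES.
have ac : a \in cover S by apply/bigcupP; exists E; rewrite // Eab set21.
exists a => //; rewrite matching_permE switch_off_cycle ?cover_off_cycle //.
by rewrite (matching_share ES (partner_edge ac) _ (set21 _ _)) // Eab set21.
Qed.

Lemma matching_perm_neq : matching_perm true != matching_perm false.
Proof.
have k_gt0 : (0 < k)%N by apply: ltn_trans k_gt2.
apply/eqP => /permP /(_ (c (Ordinal k_gt0))); rewrite !matching_permE !switch_cycle /=.
by move/c_inj/eqP; rewrite (negbTE (ordS_neq_pred _ k_gt2)).
Qed.

Lemma admissible_fibre s : admissible s -> matching_of s = S ->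
  s = matching_perm true \/ s = matching_perm false.
Proof.
move=> s_adm sS; have [b s_rot] := admissible_rotation s_adm.
suff -> : s = matching_perm b by case: b {s_rot}; [left | right].
apply/permP => x; rewrite matching_permE.
have [/imsetP [j _ ->]|xC] := boolP (x \in C); first by rewrite switch_cycle s_rot.
rewrite switch_off_cycle //; have [sx|sx] := eqVneq (s x) x.
  by rewrite sx partner_out // -sS (cover_matching_of s_adm s_rot) !inE sx eqxx andbF.
have xO : x \in off_cycle_moved s by rewrite !inE xC sx.
by apply/esym/partner_eq; rewrite -sS; apply: imset_f.
Qed.

End MatchingLift.

Local Open Scope ring_scope.

Definition inv_deg x : rat := (deg adj x)%:R^-1.

Definition step_weight x y : rat := if adj x y then inv_deg x else 0.

Lemma weight_admissible s b : admissible s -> (forall j, s (c j) = c (ord_step b j)) ->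
  \prod_(x in moved s) - step_weight x (s x) =
  \prod_(x in C) - inv_deg x * \prod_(E in matching_of s) Mw adj E.
Proof.
move=> s_adm s_rot; have sa := (andP s_adm).2.
rewrite (eq_bigr (fun x => - inv_deg x)) => [|x]; last first.
  by rewrite movedP /step_weight => /(along_rel sa) ->.
rewrite (big_setID C) -/(off_cycle_moved s) (setIidPr _); last first.
  by rewrite (moved_admissible s_rot) subsetUl.
congr (_ * _); rewrite prodrN (card_off_cycle_moved s_adm s_rot) exprM sqrrN !expr1n mul1r.
by rewrite -(cover_matching_of s_adm s_rot) (big_trivIset _ (trivIset_matching_of s_adm s_rot)).
Qed.

Lemma sign_admissible s : admissible s -> (-1) ^+ s = (-1) ^+ odd t :> rat.
Proof.
move=> s_adm; have [b s_rot] := admissible_rotation s_adm.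
by rewrite (odd_perm_admissible s_adm s_rot).
Qed.

Lemma sum_moved_matchings :
  \sum_(s : {perm V} | #|moved s| == (k + 2 * t)%N)
      (-1) ^+ s * \prod_(x in moved s) - step_weight x (s x)
  = ((-1) ^+ odd t * \prod_(x in C) - inv_deg x) *+ 2 *
    \sum_(S | is_matching_in cycle_free_edges t S) \prod_(E in S) Mw adj E.
Proof.
rewrite (bigID (along adj)) /= [X in _ + X]big1 ?addr0; last first.
  move=> s /andP [_ /forall_inPn [x xm nadj]].
  by rewrite (bigD1 x xm) /= /step_weight (negbTE nadj) oppr0 mul0r mulr0.
rewrite (partition_big matching_of (is_matching_in cycle_free_edges t)) /=; last first.
  move=> s s_adm; have [b s_rot] := admissible_rotation s_adm.
  exact: matching_of_matching s_rot.
rewrite big_distrr; apply: eq_bigr => S S_match /=.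
pose lifts := [set matching_perm S_match true; matching_perm S_match false].
have fibre : [pred s | admissible s && (matching_of s == S)] =i lifts.
  move=> s; rewrite !inE /=; apply/andP/orP => [[s_adm /eqP sS]|].
    by case: (admissible_fibre S_match s_adm sS) => ->; rewrite eqxx; [left|right].
  by case=> /eqP ->; rewrite matching_perm_admissible matching_of_matching_perm.
rewrite (eq_bigr (fun=> (-1) ^+ odd t * \prod_(x in C) - inv_deg x * \prod_(E in S) Mw adj E)).
  by rewrite sumr_const (eq_card fibre) cards2 matching_perm_neq mulrnAl.
move=> s /andP [s_adm /eqP <-]; have [b s_rot] := admissible_rotation s_adm.
by rewrite (sign_admissible s_adm) (weight_admissible s_adm s_rot) mulrA.
Qed.

End Unicycle.

Local Open Scope ring_scope.

Section OddUnicycle.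
Variables (V : finType) (adj : rel V) (k : nat) (c : 'I_k -> V) (t : nat).
Hypotheses (adj_sym : symmetric adj) (adj_irr : irreflexive adj)
  (adj_conn : forall a b, connect adj a b) (card_edges : #|edges adj| = #|V|)
  (k_gt2 : (2 < k)%N) (k_odd : odd k) (c_inj : injective c)
  (c_adj : forall i, adj (c i) (c (ordS i)))
  (c_deg : forall i : 'I_k, deg adj (c i) = if val i == 0%N then 4%N else 2%N).

Let c_deg2 i : val i != 0%N -> deg adj (c i) = 2.
Proof. by rewrite c_deg => /negbTE ->. Qed.

Let matchings_sum :=
  \sum_(S | is_matching_in (cycle_free_edges adj c) t S) \prod_(E in S) Mw adj E.

Let sum_moved :=
  sum_moved_matchings adj_sym adj_irr adj_conn card_edges k_gt2 c_inj c_adj c_deg2 t k_odd.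

Lemma prod_cycle_inv_deg : \prod_(x in cycle_vertices c) - inv_deg adj x = - (2 ^+ k.+1)^-1.
Proof.
rewrite big_imset /=; last by move=> i j _ _ /c_inj.
case: k c c_inj k_odd c_deg => [//|k'] c' _ k'_odd c'_deg.
have k'_even : odd k' = false by apply: negbTE.
rewrite big_ord_recl /inv_deg c'_deg /=.
rewrite (eq_bigr (fun _ => - 2%:R^-1)) => [|i _]; last by rewrite c'_deg.
rewrite prodr_const card_ord exprNn -signr_odd k'_even mul1r exprVn !exprS.
by field; rewrite expf_neq0 // pnatr_eq0.
Qed.

Lemma char_poly_transition_coef : (k + 2 * t <= #|V|)%N ->
  (char_poly (transition adj))`_(#|V| - (k + 2 * t)) =
  - (-1) ^+ odd t / 2 ^+ k * matchings_sum.
Proof.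
move=> le_V; have diag0 x : step_weight adj x x = 0 by rewrite /step_weight adj_irr.
rewrite (char_poly_coef_moved diag0 le_V).
rewrite sum_moved /matchings_sum prod_cycle_inv_deg exprS -mulr_natr.
by field; rewrite expf_neq0 // pnatr_eq0.
Qed.

Lemma matchings_sum_eq0 : (#|V| < k + 2 * t)%N -> matchings_sum = 0.
Proof.
move=> gt_V; have := sum_moved.
rewrite [X in X = _ -> _]big_pred0 => [|s]; last first.
  by rewrite ltn_eqF // (leq_ltn_trans (max_card _) gt_V).
rewrite prod_cycle_inv_deg => /esym/eqP; rewrite mulf_eq0 => /orP [|/eqP //].
by rewrite mulrn_eq0 mulf_eq0 signr_eq0 oppr_eq0 invr_eq0 expf_eq0 pnatr_eq0.
Qed.

End OddUnicycle.

Theorem lemma3p3 (V : finType) (adj : rel V) (k : nat) (c : 'I_k -> V) (t : nat) :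
  odd_unicycle adj ->
  (3 <= k)%N -> odd k ->
  injective c ->
  (forall i : 'I_k, adj (c i) (c (ordS i))) ->
  (forall i : 'I_k, deg adj (c i) = if val i == 0%N then 4%N else 2%N) ->
  (1 <= t)%N -> (t <= k.-1./2)%N ->
  let n := #|V| in
  let F := [set e in edges adj | [disjoint e & [set c i | i : 'I_k]]] in
  let rho := fun j : nat => (char_poly (transition adj))`_j in
  (2 ^ (k + 2 * t))%:R *
     (if (k + 2 * t <= n)%N then rho (n - (k + 2 * t))%N else 0) \is a Num.int ->
  (2 ^ (2 * t))%:R *
     (\sum_(S : {set {set V}} | is_matching_in F t S) \prod_(e in S) Mw adj e)
   \is a Num.int.
Proof.
move=> [[sym irr] conn card_E _] k_gt2 k_odd c_inj c_adj c_deg _ _ n F rho.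
have coef := char_poly_transition_coef sym irr conn card_E k_gt2 k_odd c_inj c_adj c_deg.
have sum0 := matchings_sum_eq0 sym irr conn card_E k_gt2 k_odd c_inj c_adj c_deg.
rewrite /rho /n (_ : F = cycle_free_edges adj c) //.
case: leqP => [le_V|gt_V]; last by rewrite sum0 // !mulr0 rpred0.
rewrite coef //; set M := \sum_(S | _) _.
suff -> : (2 ^ (2 * t))%:R * M =
    (-1) ^+ (odd t).+1 * ((2 ^ (k + 2 * t))%:R * (- (-1) ^+ odd t / 2 ^+ k * M)).
  by rewrite rpredMsign.
rewrite !natrX exprD exprS; case: (odd t); rewrite /= ?expr0 ?expr1.
all: by field; rewrite expf_neq0 // pnatr_eq0.
Qed.
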